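(* Suppose the weight function $w$ satisfies $0<m\le w\le M$ almost everywhere. Then there exists an absolute constant $C>0$ such that for every $n\ge1$ and every $-1<x<1$, $$\lambda_x(-1)\le C\frac{M^2}{m}\cdot\frac{1}{n^2}\quad\text{and}\quad\lambda_x(1)\le C\frac{M^2}{m}\cdot\frac1{n^2}.$$
   Context: A weight function is a non-negative integrable function $w$ on $[-1,1]$ with nonzero integral. Fix $n\ge1$. Let $\varphi$ be the orthonormal polynomial of degree $n$ with positive leading coefficient w.r.t. $w(t)\,dt$ on $[-1,1]$ and $\psi$ the orthonormal polynomial of degree $n-1$ with positive leading coefficient w.r.t. $(1-t^2)w(t)\,dt$. For real $a$ let $P_a(t)=\varphi(t)-a(1-t)\psi(t)$ if $a\ge0$, $P_a(t)=\varphi(t)-a(1+t)\psi(t)$ if $a\le0$; its zeros are $-1<\xi_1(a)<\dots<\xi_n(a)<1$. The zeros of $(1-t^2)\psi(t)$ are $-1=\eta_0<\eta_1<\dots<\eta_n=1$. The following node sets each carry a unique quadrature formula with positive weights exact for all polynomials of degree $\le 2n-1$ with respect to $w$: $\{\xi_i(0)\}_{i=1}^n$; $\{\eta_0,\dots,\eta_n\}$; $\{-1\}\cup\{\xi_i(a)\}_i$ for $0<a<\infty$; $\{\xi_i(a)\}_i\cup\{1\}$ for $-\infty<a<0$. Each $x\in(-1,1)$ is a node of exactly one of them, denoted $\Sigma_x$; $\lambda_x(u)$ is the weight of $u$ in $\Sigma_x$ (and $0$ if $u$ is not a node of $\Sigma_x$). *)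

From HB Require Import structures.
From mathcomp Require Import all_boot all_order all_algebra.
From mathcomp Require Import all_classical all_reals all_analysis.
Set Implicit Arguments.
Unset Strict Implicit.
Unset Printing Implicit Defensive.
Import Order.TTheory GRing.Theory Num.Theory.
Import numFieldNormedType.Exports.
Local Open Scope classical_set_scope.
Local Open Scope ring_scope.

Section Defs.
Variable R : realType.

Definition I11 : set R := `[(-1)%R, 1%R]%classic.

Definition int11 (f : R -> R) : R := \int[@lebesgue_measure R]_(t in I11) f t.

Definition weight_fun (w : R -> R) : Prop :=
  (forall t, I11 t -> 0 <= w t) /\
  (@lebesgue_measure R).-integrable I11 (fun t => (w t)%:E) /\
  int11 w != 0.

Definition ip (v : R -> R) (p q : {poly R}) : R :=
  int11 (fun t => v t * p.[t] * q.[t]).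

Definition orthonormal_poly (v : R -> R) (k : nat) (p : {poly R}) : Prop :=
  size p = k.+1 /\ 0 < lead_coef p /\
  (forall q : {poly R}, (size q <= k)%N -> ip v p q = 0) /\
  ip v p p = 1.

Definition Pa (phi psi : {poly R}) (a : R) : {poly R} :=
  if 0 <= a then phi - a *: ((1 - 'X) * psi)
  else phi - a *: ((1 + 'X) * psi).

Definition zeros (p : {poly R}) : set R := [set t | root p t].

Definition quadrature (w : R -> R) (n : nat) (S : set R) (lam : R -> R) : Prop :=
  (forall u, S u -> 0 < lam u) /\
  (forall u, ~ S u -> lam u = 0) /\
  (forall p : {poly R}, (size p <= n.*2)%N ->
     int11 (fun t => w t * p.[t]) = \sum_(u \in S) lam u * p.[u]).

Definition family_nodes (phi psi : {poly R}) (S : set R) : Prop :=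
  S = zeros phi \/
  S = zeros ((1 - 'X ^+ 2) * psi) \/
  (exists a, 0 < a /\ S = [set -1] `|` zeros (Pa phi psi a)) \/
  (exists a, a < 0 /\ S = zeros (Pa phi psi a) `|` [set 1]).

Definition family_quadrature (w : R -> R) (n : nat) (phi psi : {poly R})
    (S : set R) (lam : R -> R) : Prop :=
  family_nodes phi psi S /\ quadrature w n S lam.

End Defs.

From HB Require Import structures.
From mathcomp Require Import all_boot all_order all_algebra.
From mathcomp Require Import all_classical all_reals all_analysis.
From mathcomp Require Import ring lra zify measurable_realfun.
Import Order.TTheory GRing.Theory Num.Theory.
Import numFieldNormedType.Exports.
Local Open Scope classical_set_scope.
Local Open Scope ring_scope.

(* For s = 1 or s = -1 take q(t) = F_n(s t) / n^2, where F_n is n times the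
   Fejer kernel written as a polynomial in x = cos(theta).  Then q has degree
   < n, q(s) = 1, and the telescoping identity (1 - x) F_n(x) = 1 - T_n(x)
   together with 0 <= F_n <= n^2 gives q(t)^2 <= 9 / (1 + n^2 |1 - s t|)^2 on
   [-1, 1].  Any positive quadrature formula exact up to degree 2n - 1 applied
   to q^2 yields lambda(s) <= int w q^2 <= M int 9 / (1 + n^2 |1 - s t|)^2
   <= 9 M / n^2, and M <= M^2 / m. *)

Section Chebyshev.
Context {R : realFieldType}.
Implicit Types (x : R) (k m n : nat).

Fixpoint cheb_pair k : {poly R} * {poly R} :=
  if k is k'.+1 then let: (p, q) := cheb_pair k' in (q, 2%:R *: 'X * q - p)
  else (1, 'X).

Definition cheb k := (cheb_pair k).1.

Lemma cheb0 : cheb 0 = 1. Proof. by []. Qed.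
Lemma cheb1 : cheb 1 = 'X. Proof. by []. Qed.
Lemma chebSS k : cheb k.+2 = 2%:R *: 'X * cheb k.+1 - cheb k.
Proof. by rewrite /cheb /=; case: (cheb_pair k). Qed.

Lemma horner_chebSS x k :
  (cheb k.+2).[x] = 2 * x * (cheb k.+1).[x] - (cheb k).[x].
Proof. by rewrite chebSS !hornerE. Qed.

Lemma cheb_ind (P : nat -> Prop) :
  P 0 -> P 1 -> (forall k, P k -> P k.+1 -> P k.+2) -> forall k, P k.
Proof.
move=> P0 P1 PSS k; suff : P k /\ P k.+1 by case.
by elim: k => [|k [Pk Pk1]]; split=> //; apply: PSS.
Qed.

Lemma size_cheb k : (size (cheb k) <= k.+1)%N.
Proof.
elim/cheb_ind: k => [||k IHk IHk1]; first by rewrite cheb0 size_poly1.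
  by rewrite cheb1 size_polyX.
rewrite chebSS; apply: (leq_trans (size_polyD _ _)); rewrite geq_max size_polyN.
apply/andP; split; last exact: leqW (leqW IHk).
apply: (leq_trans (size_polyMleq _ _)).
have := size_scale_leq 2%:R ('X : {poly R}); rewrite size_polyX; lia.
Qed.

Lemma cheb_pell x k :
  (cheb k.+1).[x] ^+ 2 - 2 * x * (cheb k.+1).[x] * (cheb k).[x]
    + (cheb k).[x] ^+ 2 = 1 - x ^+ 2.
Proof.
elim: k => [|k IHk]; first by rewrite cheb0 cheb1 !hornerE; ring.
by rewrite horner_chebSS -IHk; ring.
Qed.

Lemma horner_cheb_sqr1 x k : x ^+ 2 = 1 -> (cheb k).[x] = x ^+ k.
Proof.
move=> x2; elim/cheb_ind: k => [||k IHk IHk1]; first by rewrite cheb0 hornerC.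
  by rewrite cheb1 hornerX expr1.
rewrite horner_chebSS IHk IHk1 -(addn2 k) exprD exprSr x2.
transitivity (x ^+ k * (2 * x ^+ 2 - 1)); first by rewrite expr2; ring.
by rewrite x2; ring.
Qed.

Lemma cheb_bounded x k : -1 <= x <= 1 -> -1 <= (cheb k).[x] <= 1.
Proof.
move=> /andP[xge xle].
suff : (cheb k).[x] ^+ 2 <= 1 by move=> T2; apply/andP; split; nra.
have [x2lt1|x2ge1] := ltP (x ^+ 2) 1; last first.
  have x2 : x ^+ 2 = 1 by nra.
  by rewrite horner_cheb_sqr1 // -exprM mulnC exprM x2 expr1n.
have := cheb_pell x k; set a := _.[x]; set b := _.[x] => pell.
have : 0 <= (1 - x ^+ 2) * (1 - b ^+ 2) by have := sqr_ge0 (a - x * b); lra.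
by rewrite pmulr_rge0 ?subr_gt0 // subr_ge0.
Qed.

(* In the variable x = cos(theta), [cheb k] is cos(k theta), [dirichlet m] is the
   Dirichlet kernel 1 + 2 (cos theta + ... + cos(m theta)) and [fejer n] is n
   times the Fejer kernel. *)
Definition dirichlet m : {poly R} := 2%:R *: \sum_(k < m.+1) cheb k - 1.

Definition fejer n : {poly R} := \sum_(m < n) dirichlet m.

Lemma horner_dirichlet x m :
  (dirichlet m).[x] = 2 * \sum_(k < m.+1) (cheb k).[x] - 1.
Proof. by rewrite /dirichlet hornerD hornerN hornerZ horner_sum hornerC. Qed.

Lemma horner_fejer x n : (fejer n).[x] = \sum_(m < n) (dirichlet m).[x].
Proof. exact: horner_sum. Qed.

Lemma dirichlet_telescope x m :
  (1 - x) * (dirichlet m).[x] = (cheb m).[x] - (cheb m.+1).[x].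
Proof.
elim: m => [|m IHm].
  by rewrite horner_dirichlet big_ord_recr big_ord0 cheb0 cheb1 !hornerE; ring.
have -> : (dirichlet m.+1).[x] = (dirichlet m).[x] + 2 * (cheb m.+1).[x].
  by rewrite !horner_dirichlet [in LHS]big_ord_recr /=; ring.
by rewrite mulrDr IHm horner_chebSS; ring.
Qed.

Lemma fejer_telescope x n : (1 - x) * (fejer n).[x] = 1 - (cheb n).[x].
Proof.
elim: n => [|n IHn]; first by rewrite horner_fejer big_ord0 cheb0 hornerC; ring.
by rewrite horner_fejer big_ord_recr /= -horner_fejer mulrDr IHn dirichlet_telescope; ring.
Qed.

Lemma dirichlet_le x m : -1 <= x <= 1 -> (dirichlet m).[x] <= 2 * m%:R + 1.
Proof.
move=> x11; rewrite horner_dirichlet.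
have : \sum_(k < m.+1) (cheb k).[x] <= \sum_(k < m.+1) 1.
  by apply: ler_sum => k _; case/andP: (cheb_bounded _ k x11).
by rewrite sumr_const card_ord -natr1; lra.
Qed.

Lemma horner_dirichlet1 m : (dirichlet m).[1] = 2 * m%:R + 1.
Proof.
rewrite horner_dirichlet (eq_bigr (fun=> 1)) => [|k _]; last first.
  by rewrite horner_cheb_sqr1 ?expr1n.
by rewrite sumr_const card_ord -natr1; ring.
Qed.

Lemma sum_odd_nat n : \sum_(m < n) (2 * m%:R + 1) = n%:R ^+ 2 :> R.
Proof.
elim: n => [|n IHn]; first by rewrite big_ord0 expr0n.
by rewrite big_ord_recr /= IHn -natr1; ring.
Qed.

Lemma fejer_le x n : -1 <= x <= 1 -> (fejer n).[x] <= n%:R ^+ 2.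
Proof.
by move=> x11; rewrite horner_fejer -sum_odd_nat; apply: ler_sum => m _; apply: dirichlet_le.
Qed.

Lemma horner_fejer1 n : (fejer n).[1] = n%:R ^+ 2.
Proof.
by rewrite horner_fejer -sum_odd_nat; apply: eq_bigr => m _; apply: horner_dirichlet1.
Qed.

Lemma fejer_ge0 x n : -1 <= x <= 1 -> 0 <= (fejer n).[x].
Proof.
move=> x11; have [->|xn1] := eqVneq x 1; first by rewrite horner_fejer1 sqr_ge0.
have xlt1 : x < 1 by rewrite lt_neqAle xn1; case/andP: x11.
have : 0 <= (1 - x) * (fejer n).[x].
  by rewrite fejer_telescope subr_ge0; case/andP: (cheb_bounded _ n x11).
by rewrite pmulr_rge0 // subr_gt0.
Qed.

Lemma size_fejer n : (size (fejer n) <= n)%N.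
Proof.
rewrite /fejer; elim: n => [|n IHn]; first by rewrite big_ord0 size_poly0.
rewrite big_ord_recr /=; apply: (leq_trans (size_polyD _ _)); rewrite geq_max.
rewrite (leq_trans IHn) //=; apply: (leq_trans (size_polyD _ _)).
rewrite geq_max size_polyN size_poly1 andbT; apply: (leq_trans (size_scale_leq _ _)).
apply: (leq_trans (size_sum _ _ _)); apply/bigmax_leqP => k _.
exact: leq_trans (size_cheb k) (ltn_ord k).
Qed.

Definition peak_poly n (s : R) : {poly R} :=
  (n%:R ^+ 2)^-1 *: (fejer n \Po (s *: 'X)).

Definition peak_bound (c s t : R) : R := 9 / (1 + c * `|1 - s * t|) ^+ 2.

Lemma horner_peak_poly n s t :
  (peak_poly n s).[t] = (fejer n).[s * t] / n%:R ^+ 2.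
Proof. by rewrite /peak_poly hornerZ horner_comp hornerZ hornerX mulrC. Qed.

Lemma size_peak_poly n s : (0 < n)%N -> (size (peak_poly n s) <= n)%N.
Proof.
move=> n_gt0; apply: leq_trans (size_scale_leq _ _) _.
apply: leq_trans (size_comp_poly_leq _ _) _.
have := size_fejer n; have := size_scale_leq s ('X : {poly R}).
rewrite size_polyX; move: (size (s *: ('X : {poly R}))) (size (fejer n)) => a b; nia.
Qed.

Lemma peak_poly_at n s :
  (0 < n)%N -> s = 1 \/ s = -1 -> (peak_poly n s).[s] = 1.
Proof.
move=> n_gt0 s1; rewrite horner_peak_poly (_ : s * s = 1); last by case: s1 => ->; ring.
by rewrite horner_fejer1 divff // expf_neq0 // pnatr_eq0 -lt0n.
Qed.

Lemma peak_poly_sqr_le n s t : (0 < n)%N -> s = 1 \/ s = -1 -> -1 <= t <= 1 ->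
  (peak_poly n s).[t] ^+ 2 <= peak_bound (n%:R ^+ 2) s t.
Proof.
move=> n_gt0 s1 t11.
have st11 : -1 <= s * t <= 1.
  by case: s1 => ->; case/andP: t11 => ? ?; apply/andP; split; lra.
have st_le1 : 0 <= 1 - s * t by rewrite subr_ge0; case/andP: st11.
set c := n%:R ^+ 2; have c_gt0 : 0 < c by rewrite exprn_gt0 // ltr0n.
rewrite horner_peak_poly /peak_bound ger0_norm //.
set F := (fejer n).[s * t].
have F_ge0 : 0 <= F by exact: fejer_ge0.
have F_le1 : F / c <= 1 by rewrite ler_pdivrMr // mul1r fejer_le.
have tF_le2 : (1 - s * t) * F <= 2.
  by rewrite fejer_telescope; case/andP: (cheb_bounded _ n st11) => ? _; lra.
have : F / c * (1 + c * (1 - s * t)) <= 3.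
  have -> : F / c * (1 + c * (1 - s * t)) = F / c + (1 - s * t) * F.
    by field; rewrite lt0r_neq0.
  lra.
have a_ge0 := mulr_ge0 (ltW c_gt0) st_le1.
have den_gt0 : 0 < 1 + c * (1 - s * t) by lra.
have := mulr_ge0 (divr_ge0 F_ge0 (ltW c_gt0)) (ltW den_gt0).
rewrite ler_pdivlMr ?exprn_gt0 // -exprMn; set X := _ * _; nra.
Qed.

End Chebyshev.

Section PeakIntegral.
Context {R : realType}.
Implicit Types c s x y : R.

Lemma peak_bound_continuous c s : 0 <= c -> continuous (peak_bound c s).
Proof.
move=> c_ge0 x; have den_gt0 : 0 < 1 + c * `|1 - s * x|.
  by rewrite ltr_pwDl // mulr_ge0.
apply: cvgM; first exact: cvg_cst.
apply: cvgV; first by rewrite expf_neq0 // gt_eqF.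
have h : (fun y => 1 + c * `|1 - s * y|) @ x --> 1 + c * `|1 - s * x|.
  by apply: cvgD; [exact: cvg_cst | apply: cvgMr; apply: cvg_norm; apply: cvgD;
      [exact: cvg_cst | apply: cvgN; apply: cvgMr; exact: cvg_id]].
exact: cvgM.
Qed.

Definition peak_linear c s : {poly R} := (1 + c)%:P - (c * s) *: 'X.

Definition peak_primitive c s (y : R) : R := 9 * s / c * ((peak_linear c s).[y])^-1.

Lemma horner_peak_linear c s y : (peak_linear c s).[y] = 1 + c * (1 - s * y).
Proof. by rewrite /peak_linear !hornerE; ring. Qed.

Lemma peak_linear_gt0 c s y : s = 1 \/ s = -1 -> 0 <= c -> -1 <= y <= 1 ->
  0 < (peak_linear c s).[y].
Proof.
move=> s1 c_ge0 /andP[? ?]; rewrite horner_peak_linear.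
have : 0 <= 1 - s * y by case: s1 => ->; lra.
by move=> /(mulr_ge0 c_ge0); lra.
Qed.

Lemma is_derive_peak_primitive c s x : s = 1 \/ s = -1 -> 0 < c -> -1 < x < 1 ->
  is_derive x 1 (peak_primitive c s) (peak_bound c s x).
Proof.
move=> s1 c_gt0 /andP[? ?]; set p := peak_linear c s.
have p_gt0 : 0 < p.[x] by apply: peak_linear_gt0 => //; [exact: ltW | lra].
have D := is_deriveZ (9 * s / c) (is_deriveV (lt0r_neq0 p_gt0) (is_derive_poly p x)).
have -> : peak_bound c s x = 9 * s / c *: (- p.[x] ^- 2 *: p^`().[x]).
  have -> : p^`() = - (c * s)%:P.
    by rewrite /p /peak_linear derivB derivC derivZ derivX sub0r alg_polyC.
  have s2 : s * s = 1 by case: s1 => ->; ring.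
  rewrite /peak_bound ger0_norm -?horner_peak_linear; last by case: s1 => ->; lra.
  rewrite hornerN hornerC /GRing.scale /= -[9 in LHS]mulr1 -s2.
  by field; rewrite lt0r_neq0 ?gt_eqF.
by congr (is_derive _ _ _ _): D.
Qed.

Lemma peak_primitive_cvg c s x : s = 1 \/ s = -1 -> 0 <= c -> -1 <= x <= 1 ->
  peak_primitive c s y @[y --> x] --> peak_primitive c s x.
Proof.
move=> s1 c_ge0 x11; apply: cvgM; first exact: cvg_cst.
by apply: cvgV; [rewrite gt_eqF // peak_linear_gt0 | exact: continuous_horner].
Qed.

Lemma integral_peak_bound_le c s : s = 1 \/ s = -1 -> 0 < c ->
  (\int[lebesgue_measure]_(t in `[(-1)%R, 1%R]) (peak_bound c s t)%:E <= (9 / c)%:E)%E.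
Proof.
move=> s1 c_gt0; rewrite (@continuous_FTC2 _ _ (peak_primitive c s)).
- rewrite -EFinD lee_fin.
  have -> : peak_primitive c s 1 - peak_primitive c s (-1)
            = 9 / c * (1 - (1 + 2 * c)^-1).
    rewrite /peak_primitive !horner_peak_linear.
    by case: s1 => ->; field; rewrite ?lt0r_neq0 //; lra.
  by apply: ler_piMr; [rewrite divr_ge0 ?ltW | rewrite gerBl invr_ge0; lra].
- lra.
- by apply: continuous_subspaceT; apply: peak_bound_continuous; exact: ltW.
- split.
  + by move=> x; rewrite in_itv /= => x11; case: (is_derive_peak_primitive _ _ _ s1 c_gt0 x11).
  + by apply: cvg_at_right_filter; apply: peak_primitive_cvg => //; [exact: ltW | lra].
  + by apply: cvg_at_left_filter; apply: peak_primitive_cvg => //; [exact: ltW | lra].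
- move=> x; rewrite in_itv /= => x11.
  by rewrite derive1E; apply: derive_val; exact: is_derive_peak_primitive.
Qed.

End PeakIntegral.

Section Quadrature.
Context {R : realType}.
Notation mu := (@lebesgue_measure R).
Implicit Types (w f g lam : R -> R) (S : set R) (n : nat).

(* [filterS] for Lebesgue-almost-everywhere statements: typeclass inference
   does not find the [Filter] instance of [almost_everywhere] here. *)
Lemma lebesgue_aeS (P Q : R -> Prop) :
  (forall t, P t -> Q t) -> {ae mu, forall t, P t} -> {ae mu, forall t, Q t}.
Proof. exact: (@filterS _ _ (ae_filter_ringOfSetsType mu)). Qed.

Lemma quadrature_finite {w n S lam} : weight_fun w -> (0 < n)%N ->
  quadrature w n S lam -> finite_set S.
Proof.
move=> [_ [_ w_neq0]] n_gt0 [lam_gt0 [_ exact_w]].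
apply: contrapT => infS.
have := exact_w 1; rewrite size_poly1 double_gt0 n_gt0 => /(_ isT).
rewrite fsbig_dflt.
  by under eq_fun do rewrite hornerC mulr1; apply/eqP.
suff -> : S `&` (fun u => lam u * 1.[u]) @^-1` [set~ 0] = S by [].
apply/seteqP; split=> [u [] //|u Su]; split=> //=.
by rewrite hornerC mulr1; apply/eqP; rewrite gt_eqF // lam_gt0.
Qed.

Lemma quadrature_weight_le {w n S lam} (p : {poly R}) u :
  weight_fun w -> (0 < n)%N -> quadrature w n S lam ->
  (size p <= n.*2)%N -> (forall v, S v -> 0 <= p.[v]) -> p.[u] = 1 ->
  lam u <= int11 (fun t => w t * p.[t]).
Proof.
move=> wf n_gt0 qS size_p p_ge0 pu1.
have finS := quadrature_finite wf n_gt0 qS.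
case: qS => lam_gt0 [lam_out exact_w]; rewrite exact_w //.
have terms_ge0 v : S v -> 0 <= lam v * p.[v].
  by move=> Sv; rewrite mulr_ge0 ?p_ge0 // ltW ?lam_gt0.
have [Su|nSu] := pselect (S u); last by rewrite lam_out // fsumr_ge0.
rewrite (fsbigD1 u) //= pu1 mulr1 lerDl fsumr_ge0 // => v [Sv _].
exact: terms_ge0.
Qed.

Lemma int11_weighted_le w f g (M b : R) :
  weight_fun w -> 0 <= M -> {ae mu, forall t, I11 t -> w t <= M} ->
  measurable_fun (@I11 R) f -> measurable_fun (@I11 R) g ->
  (forall t, I11 t -> 0 <= f t <= g t) ->
  (\int[mu]_(t in @I11 R) (g t)%:E <= b%:E)%E ->
  int11 (fun t => w t * f t) <= M * b.
Proof.
move=> [w_ge0 [w_int _]] M_ge0 w_le_M mf mg fg g_le_b.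
have mI : measurable (@I11 R) by exact: measurable_itv.
have mw : measurable_fun (@I11 R) w by case/integrableP: w_int => /measurable_EFinP.
have g_ge0 t : I11 t -> 0 <= g t by move=> It; case/andP: (fg t It); exact: le_trans.
have wf_ge0 t : I11 t -> 0 <= w t * f t.
  by move=> It; rewrite mulr_ge0 ?w_ge0 //; case/andP: (fg t It).
have int_le : (\int[mu]_(t in @I11 R) (w t * f t)%:E <= (M * b)%:E)%E.
  apply: (@le_trans _ _ (\int[mu]_(t in @I11 R) (M%:E * (g t)%:E))%E).
    apply: ae_ge0_le_integral => //.
    - exact/measurable_EFinP/measurable_funM.
    - by move=> t It; rewrite mule_ge0 // lee_fin g_ge0.
    - exact/measurable_funeM/measurable_EFinP.
    apply: lebesgue_aeS w_le_M => t wM It; rewrite -EFinM lee_fin.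
    by case/andP: (fg t It) => ? ?; have := w_ge0 t It; have := wM It; nra.
  rewrite ge0_integralZl_EFin //; last exact/measurable_EFinP.
  by rewrite EFinM lee_wpmul2l // lee_fin.
rewrite /int11 /Rintegral -lee_fin fineK //.
by rewrite ge0_fin_numE ?(le_lt_trans int_le) ?ltry // integral_ge0 // => t It; rewrite lee_fin wf_ge0.
Qed.

Lemma quadrature_endpoint_weight_le {w} {M : R} {n S lam} s :
  weight_fun w -> 0 <= M -> {ae mu, forall t, I11 t -> w t <= M} ->
  (0 < n)%N -> quadrature w n S lam -> s = 1 \/ s = -1 ->
  lam s <= M * (9 / n%:R ^+ 2).
Proof.
move=> wf M_ge0 w_le_M n_gt0 qS s1.
have c_gt0 : 0 < n%:R ^+ 2 :> R by rewrite exprn_gt0 // ltr0n.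
set q := peak_poly n s.
have size_qq : (size (q * q)%R <= n.*2)%N.
  have := size_polyMleq q q; have := size_peak_poly n s n_gt0; rewrite -/q.
  move: (size (q * q)%R) (size q) => a b; lia.
have qq_ge0 t : 0 <= (q * q).[t] by rewrite hornerM -expr2 sqr_ge0.
have qq_s : (q * q).[s] = 1 by rewrite hornerM peak_poly_at // mulr1.
apply: le_trans (quadrature_weight_le _ _ wf n_gt0 qS size_qq _ qq_s) _ => [v _|].
  exact: qq_ge0.
apply: (@int11_weighted_le w _ (peak_bound (n%:R ^+ 2) s)) => //.
- exact: measurable_poly.
- apply: measurable_funTS; apply: continuous_measurable_fun.
  exact: peak_bound_continuous (ltW c_gt0).
- move=> t It; apply/andP; split; first exact: qq_ge0.
  by rewrite hornerM -expr2 peak_poly_sqr_le.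
- exact: integral_peak_bound_le.
Qed.

Lemma ae_bounds11_le {w} {m M : R} :
  {ae mu, forall t, I11 t -> m <= w t <= M} -> m <= M.
Proof.
move=> [N [mN N0 sub]]; rewrite leNgt; apply/negP => Mm.
have IN : @I11 R `<=` N.
  by move=> t It; apply: sub => /(_ It) /andP[wm wM]; rewrite ltNge (le_trans wm wM) in Mm.
have := le_measure mu (mem_set (measurable_itv _)) (mem_set mN) IN.
move: N0 => /= ->; rewrite lebesgue_measure_itv /= lte_fin ifT; last lra.
by rewrite opprK -EFinD lee_fin; lra.
Qed.

End Quadrature.

Theorem lemma3p7 (R : realType) :
  exists C : R, 0 < C /\
  forall (w : R -> R) (m M : R),
    weight_fun w -> 0 < m ->
    {ae @lebesgue_measure R, forall t, I11 t -> m <= w t <= M} ->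
    forall (n : nat), (1 <= n)%N ->
    forall phi psi : {poly R},
      orthonormal_poly w n phi ->
      orthonormal_poly (fun t => (1 - t ^+ 2) * w t) n.-1 psi ->
    forall x : R, -1 < x < 1 ->
    forall (S : set R) (lam : R -> R),
      family_quadrature w n phi psi S lam -> S x ->
      lam (-1) <= C * (M ^+ 2 / m) * (1 / (n%:R ^+ 2)) /\
      lam 1 <= C * (M ^+ 2 / m) * (1 / (n%:R ^+ 2)).
Proof.
exists 9; split=> // w m M wf m_gt0 w_bounds n n_gt0 phi psi _ _ x _ S lam [_ qS] _.
have m_le_M := ae_bounds11_le w_bounds.
have w_le_M : {ae @lebesgue_measure R, forall t, I11 t -> w t <= M}.
  by apply: lebesgue_aeS w_bounds => t wmM It; case/andP: (wmM It).
have M_le : M * (9 / n%:R ^+ 2) <= 9 * (M ^+ 2 / m) * (1 / n%:R ^+ 2).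
  rewrite (_ : _ * (1 / _) = M ^+ 2 / m * (9 / n%:R ^+ 2)); last by ring.
  by rewrite ler_wpM2r ?divr_ge0 ?ler0n // ler_pdivlMr // expr2 ler_wpM2l //; lra.
have M_ge0 : 0 <= M by lra.
split; apply: le_trans M_le.
  by apply: (quadrature_endpoint_weight_le (-1) wf M_ge0 w_le_M n_gt0 qS); right.
by apply: (quadrature_endpoint_weight_le 1 wf M_ge0 w_le_M n_gt0 qS); left.
Qed.
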